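(* Let $a,b$ be positive integers with $a > b > 0$, $\gcd(a,b)=1$ and $a \not\equiv b \pmod 2$, and put $$N_{1,7} = (a+b)^2 - 2b^2,\qquad N_{1,5} = a^2+b^2,\qquad N_{1,3} = (a-b)^2+2b^2 .$$ Then $N_{1,3}, N_{1,5}, N_{1,7}$ are pairwise relatively prime: $\gcd(N_{1,5},N_{1,7}) = \gcd(N_{1,3},N_{1,5}) = \gcd(N_{1,3},N_{1,7}) = 1$. *)

From mathcomp Require Import all_boot.
(* Natural-number setting (ssrnat). Since a > b > 0, the subtractions
   a - b and (a+b)^2 - 2 b^2 are not truncated. *)
Definition N17 (a b : nat) : nat := (a + b) ^ 2 - 2 * b ^ 2.
Definition N15 (a b : nat) : nat := a ^ 2 + b ^ 2.
Definition N13 (a b : nat) : nat := (a - b) ^ 2 + 2 * b ^ 2.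

From mathcomp Require Import all_boot zify.

(* Write c = a - b, which is odd. Then N13 = c^2 + 2 b^2, N15 = N13 + 2 c b and
   N17 = N15 + 2 c b, so every pairwise gcd reduces to gcd(c^2 + 2 b^2, 2^k c b).
   That gcd is 1: c^2 + 2 b^2 is odd, it is coprime to b because c is, and
   coprime to c because 2 b^2 is. *)

Lemma coprime_sqr_add_double_sqr (c b : nat) :
  odd c -> coprime c b -> coprime (c ^ 2 + 2 * b ^ 2) (c * b).
Proof.
move=> odd_c cop_cb; rewrite coprimeMr; apply/andP; split.
- rewrite coprime_sym /coprime -mulnn mulnA gcdnMDl.
  by rewrite -/(coprime c _) !coprimeMr coprimen2 odd_c cop_cb.
- rewrite /coprime gcdnC addnC -mulnn mulnA gcdnMDl.
  by rewrite -/(coprime b _) coprime_sym coprimeXl.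
Qed.

Lemma coprime_odd_pow2_mul (x k m : nat) :
  odd x -> coprime x m -> coprime x (2 ^ k * m).
Proof. by move=> odd_x cop_xm; rewrite coprimeMr cop_xm coprimeXr // coprimen2. Qed.

Lemma N15_N13 (a b : nat) : b <= a -> N15 a b = N13 a b + 2 * ((a - b) * b).
Proof.
by move=> /subnK <-; rewrite /N15 /N13 addnK; lia.
Qed.

Lemma N17_N15 (a b : nat) : b <= a -> N17 a b = N15 a b + 2 * ((a - b) * b).
Proof.
by move=> /subnK <-; rewrite /N17 /N15 addnK; nia.
Qed.

Theorem theorem4p2 (a b : nat) :
  0 < b -> b < a -> coprime a b -> odd a != odd b ->
  [/\ gcdn (N15 a b) (N17 a b) = 1,
      gcdn (N13 a b) (N15 a b) = 1 &
      gcdn (N13 a b) (N17 a b) = 1].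
Proof.
move=> _ lt_ba cop_ab odd_ab; have le_ba := ltnW lt_ba.
set c := a - b; have def_a : a = c + b by rewrite subnK.
have odd_c : odd c by move: odd_ab; rewrite def_a oddD; case: (odd c); case: (odd b).
have cop_cb : coprime c b by move: cop_ab; rewrite def_a /coprime gcdnC gcdnDr gcdnC.
have odd_N13 : odd (N13 a b) by rewrite /N13 -/c oddD oddM oddX odd_c.
have cop_N13 k : coprime (N13 a b) (2 ^ k * (c * b)).
  by apply: coprime_odd_pow2_mul => //; rewrite /N13 -/c coprime_sqr_add_double_sqr.
have E15 := N15_N13 a b le_ba; have E17 := N17_N15 a b le_ba; rewrite -/c in E15 E17.
split; apply/eqP.
- by rewrite E17 gcdnDl E15 gcdnC gcdnDr gcdnC; exact: (cop_N13 1).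
- by rewrite E15 gcdnDl; exact: (cop_N13 1).
- by rewrite E17 E15 -addnA addnn -mul2n mulnA gcdnDl; exact: (cop_N13 2).
Qed.
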